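(* Let $a<c<b<d$ be integers, so that the finite arcs $(a,b)$ and $(c,d)$ cross. Then there are non-split short exact sequences in $\mathcal{C}_2$ \[ 0\to(a,b)\xrightarrow{f}(c,b)\oplus(a,d)\xrightarrow{g}(c,d)\to0,\qquad 0\to(c,d)\xrightarrow{f'}(a,c)\oplus(b,d)\xrightarrow{g'}(a,b)\to0. \]
   Context: Let $R=\mathbb{C}[x,y]/(x^2)$, graded with $\deg x=1$, $\deg y=-1$; $M(j)_n=M_{j+n}$. $\mathcal{C}_2$ is the exact category of finitely generated $\mathbb{Z}$-graded maximal Cohen–Macaulay $R$-modules with degree-preserving morphisms. An arc is a pair $(a,b)$ with $a\in\mathbb{Z}\cup\{-\infty\}$, $b\in\mathbb{Z}$, $a<b$; a finite arc $(a,b)$ ($a\in\mathbb{Z}$) denotes the module $(x,y^{b-a-1})(1-b)$ (where $(x,y^0)=R$), and an infinite arc $(-\infty,b)$ denotes $\mathbb{C}[y](-b)=(R/(x))(-b)$. *)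

From HB Require Import structures.
From mathcomp Require Import all_boot all_order all_algebra.
From mathcomp Require Import complex.
From mathcomp Require Import Rstruct.

Set Implicit Arguments.
Unset Strict Implicit.
Unset Printing Implicit Defensive.

Import Order.TTheory GRing.Theory Num.Theory.
Local Open Scope ring_scope.

Definition CC : fieldType := (Rdefinitions.R)[i].

(* Graded modules over R = C[x,y]/(x^2), deg x = 1, deg y = -1.              *)
(* A Z-graded R-module with finite-dimensional homogeneous pieces is given   *)
(* by: dimensions dim n of the pieces M_n (identified with row vectors of    *)
(* length dim n), the action of x : M_n -> M_(n+1) as the matrix X n and the *)
(* action of y : M_(n+1) -> M_n as the matrix Y n (row-vector convention:    *)
(* v |-> v *m X n).                                                          *)
Record grmod (F : fieldType) := GrMod {
  gdim : int -> nat;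
  gX : forall n : int, 'M[F]_(gdim n, gdim (n + 1));
  gY : forall n : int, 'M[F]_(gdim (n + 1), gdim n)
}.

Section GradedModules.
Variable F : fieldType.

(* Module axioms: x^2 = 0 and xy = yx (on every homogeneous piece). *)
Definition grmod_axioms (M : grmod F) : Prop :=
  forall n : int, gX M n *m gX M (n + 1) = 0 /\
                  gY M n *m gX M n = gX M (n + 1) *m gY M (n + 1).

Definition grhom (M N : grmod F) := forall n : int, 'M[F]_(gdim M n, gdim N n).

Definition is_grhom (M N : grmod F) (f : grhom M N) : Prop :=
  forall n : int, f n *m gX N n = gX M n *m f (n + 1) /\
                  gY M n *m f n = f (n + 1) *m gY N n.

Definition grsum (M N : grmod F) : grmod F :=
  @GrMod F (fun n => (gdim M n + gdim N n)%N)
    (fun n => block_mx (gX M n) 0 0 (gX N n))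
    (fun n => block_mx (gY M n) 0 0 (gY N n)).

Definition short_exact (A B C : grmod F) (f : grhom A B) (g : grhom B C) : Prop :=
  is_grhom f /\ is_grhom g /\
  forall n : int,
    [/\ row_free (f n), row_full (g n), f n *m g n = 0 & (kermx (g n) <= f n)%MS].

Definition splits (A B C : grmod F) (f : grhom A B) (g : grhom B C) : Prop :=
  exists s : grhom C B, is_grhom s /\ forall n : int, s n *m g n = 1%:M.

(* The graded module (x, y^k)(j) (with (x, y^0) = R).                       *)
(* The degree-m piece of the ideal I = (x, y^k) of R has basis              *)
(*   index 0 : x y^(1-m)   (present iff m <= 1),                            *)
(*   index 1 : y^(-m)      (present iff m <= -k);                           *)
(* the twist (j) gives M_n = I_(j+n).                                      *)
(* x sends y^(-m) to x y^(1-(m+1)) and kills x y^(1-m);                     *)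
(* y sends x y^(1-(m+1)) to x y^(1-m) and y^(-(m+1)) to y^(-m).             *)
Definition ideal_dim (k : nat) (j n : int) : nat :=
  addn (nat_of_bool (j + n <= 1)) (nat_of_bool (j + n <= - (k%:Z))).

Definition ideal_mod (k : nat) (j : int) : grmod F :=
  @GrMod F (ideal_dim k j)
    (fun n => \matrix_(i, l) ((i == 1%N :> nat) && (l == 0%N :> nat))%:R)
    (fun n => \matrix_(i, l) (i == l :> nat)%:R).

Definition farc (a b : int) : grmod F := ideal_mod (absz (b - a - 1)%R) (1 - b)%R.

End GradedModules.

From HB Require Import structures.
From mathcomp Require Import all_boot all_order all_algebra.
From mathcomp Require Import complex Rstruct zify.
Set Implicit Arguments.
Unset Strict Implicit.
Unset Printing Implicit Defensive.

Import Order.TTheory GRing.Theory Num.Theory.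
Local Open Scope ring_scope.

(* In each degree n the arc module (a,b) has the basis vector e0 = x y^k (present
   for n <= b) and e1 = y^k' (present for n <= a); x sends e1 to e0 one degree up
   and kills e0, y sends each e_i to e_i one degree down.  All maps of the two
   sequences are 0/1 matrices in these bases, and exactness is a rank count in
   each degree.
   A section of g gives morphisms h1 : (c,d) -> (c,b) and h2 : (c,d) -> (a,d)
   with h1 - h2 = id.  In degree c the (e1,e1)-coefficient of h2 vanishes, as
   (a,d) has no e1 there, and by x-linearity that of h1 is its (e0,e0)-coefficient
   in degree c+1, which by y-linearity equals the one in degree b+1, where (c,b)
   is zero.  A section of g' gives h1 - h2 x = id on (a,b); in degree c+1 the
   first term vanishes because (a,c) is zero there, and the second would have to
   send e0, which x kills, to a vector with a nonzero e1-coordinate in (b,d). *)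

Section BasisMatrices.
Variable R : pzRingType.

Definition basismx m n (f : nat -> nat) (P : pred nat) : 'M[R]_(m, n) :=
  \matrix_(i, l) ((l == f i :> nat) && P i)%:R.
Arguments basismx {m n} f P.

Lemma eq_basismx m n f g (P Q : pred nat) :
  (forall i l, (i < m)%N -> (l < n)%N ->
    (l == f i) && P i = (l == g i) && Q i) ->
  basismx f P = basismx g Q :> 'M_(m, n).
Proof. by move=> eqPQ; apply/matrixP => i l; rewrite !mxE eqPQ. Qed.

Lemma basismx_eq0 m n f (P : pred nat) :
  (forall i, (i < m)%N -> P i -> (n <= f i)%N) -> basismx f P = 0 :> 'M_(m, n).
Proof.
move=> outP; apply/matrixP => i l; rewrite !mxE.
case: eqP => [eq_l | _]; case Pi: (P i) => //=.
by move: (ltn_ord l); rewrite eq_l ltnNge outP.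
Qed.

Lemma basismx1 n : basismx id predT = 1%:M :> 'M_n.
Proof. by apply/matrixP => i l; rewrite !mxE andbT eq_sym. Qed.

Lemma mul_basismx m n p f g (P Q : pred nat) :
  (basismx f P : 'M_(m, n)) *m (basismx g Q : 'M_(n, p)) =
    basismx (g \o f) (fun i => [&& (f i < n)%N, P i & Q (f i)]).
Proof.
apply/matrixP => i l; rewrite !mxE /=; under eq_bigr do rewrite !mxE.
case: (ltnP (f i) n) => [lt_fi | le_fi] /=.
  rewrite (bigD1 (Ordinal lt_fi)) //= big1 ?addr0; last first.
    by move=> k; rewrite -val_eqE /= => /negbTE neq_k; rewrite neq_k mul0r.
  by rewrite eqxx -natrM mulnb; case: (P i); rewrite ?andbF.
rewrite andbF big1 // => k _.
case: eqP => [eq_k | _]; rewrite ?mul0r //.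
by move: (ltn_ord k); rewrite eq_k ltnNge le_fi.
Qed.

Definition inclmx m n : 'M[R]_(m, n) := basismx id predT.
Definition xmx m n : 'M[R]_(m, n) := basismx (fun _ => 0%N) (pred1 1%N).
Definition erow n i : 'rV[R]_n := basismx (fun _ => i) predT.
Definition ecol n j : 'cV[R]_n := basismx (fun _ => 0%N) (pred1 j).

Arguments inclmx {m n}.
Arguments xmx {m n}.
Arguments erow {n} i.
Arguments ecol {n} j.

Definition mxcoef m n i j (A : 'M[R]_(m, n)) : R := (erow i *m A *m ecol j) 0 0.

Lemma ecol_eq0 n j : (n <= j)%N -> ecol j = 0 :> 'cV_n.
Proof. by move=> le_nj; apply: basismx_eq0 => i /= lt_in /eqP eq_ij; lia. Qed.

Lemma erow_mul_ecol n i : (i < n)%N -> (erow i : 'rV_n) *m ecol i = 1%:M.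
Proof.
by move=> lt_in; rewrite mul_basismx -basismx1; apply: eq_basismx => k l /=; lia.
Qed.

Lemma erow_mul_inclmx m n j :
  ((j < n)%N -> (j < m)%N) -> (erow j : 'rV_m) *m inclmx = erow j :> 'rV_n.
Proof. by move=> lt_jnm; rewrite mul_basismx; apply: eq_basismx => k l /=; lia. Qed.

Lemma erow0_mul_xmx m n : (erow 0 : 'rV_m) *m xmx = 0 :> 'rV_n.
Proof. by rewrite mul_basismx; apply: basismx_eq0 => i _; rewrite /= andbF. Qed.

Lemma erow1_mul_xmx m n : (1 < m)%N -> (erow 1 : 'rV_m) *m xmx = erow 0 :> 'rV_n.
Proof. by move=> lt_1m; rewrite mul_basismx; apply: eq_basismx => i l /=; lia. Qed.

Lemma inclmx_mul_ecol m n j :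
  ((j < m)%N -> (j < n)%N) -> inclmx *m (ecol j : 'cV_n) = ecol j :> 'cV_m.
Proof. by move=> lt_jmn; rewrite mul_basismx; apply: eq_basismx => i l /=; lia. Qed.

Lemma xmx_mul_ecol0 m n :
  ((1 < m)%N -> (0 < n)%N) -> xmx *m (ecol 0 : 'cV_n) = ecol 1 :> 'cV_m.
Proof. by move=> lt_1mn; rewrite mul_basismx; apply: eq_basismx => i l /=; lia. Qed.

Lemma mxcoefN m n i j (A : 'M_(m, n)) : mxcoef i j (- A) = - mxcoef i j A.
Proof. by rewrite /mxcoef mulmxN mulNmx mxE. Qed.

Lemma mxcoefD m n i j (A B : 'M_(m, n)) : mxcoef i j (A + B) = mxcoef i j A + mxcoef i j B.
Proof. by rewrite /mxcoef mulmxDr mulmxDl mxE. Qed.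

Lemma mxcoef_eq0 m n i j (A : 'M_(m, n)) : (n <= j)%N -> mxcoef i j A = 0.
Proof. by move=> le_nj; rewrite /mxcoef ecol_eq0 // mulmx0 mxE. Qed.

Lemma mxcoef1 n i : (i < n)%N -> mxcoef i i (1%:M : 'M_n) = 1.
Proof. by move=> lt_in; rewrite /mxcoef mulmx1 erow_mul_ecol // mxE. Qed.

Lemma mxcoef_mul_inclmx m n p i j (A : 'M_(m, n)) :
  ((j < n)%N -> (j < p)%N) -> mxcoef i j (A *m (inclmx : 'M_(n, p))) = mxcoef i j A.
Proof. by move=> lt_jnp; rewrite /mxcoef -!mulmxA inclmx_mul_ecol. Qed.

Lemma mxcoef_mul_xmx m n p i (A : 'M_(m, n)) :
  ((1 < n)%N -> (0 < p)%N) -> mxcoef i 0 (A *m (xmx : 'M_(n, p))) = mxcoef i 1 A.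
Proof. by move=> lt_1np; rewrite /mxcoef -!mulmxA xmx_mul_ecol0. Qed.

End BasisMatrices.

Arguments basismx {R m n} f P.
Arguments inclmx {R m n}.
Arguments xmx {R m n}.
Arguments erow {R n} i.
Arguments ecol {R n} j.

Section GradedMorphisms.
Variable F : fieldType.
Implicit Types A B C M N : grmod F.

Lemma gdim_grsum M N n : gdim (grsum M N) n = (gdim M n + gdim N n)%N.
Proof. by []. Qed.

Definition grrow A B C (f1 : grhom A B) (f2 : grhom A C) : grhom A (grsum B C) :=
  fun n => row_mx (f1 n) (f2 n).
Definition grcol A B C (g1 : grhom A C) (g2 : grhom B C) : grhom (grsum A B) C :=
  fun n => col_mx (g1 n) (g2 n).
Definition gropp A B (g : grhom A B) : grhom A B := fun n => - g n.

Lemma is_grhom_row A B C (f1 : grhom A B) (f2 : grhom A C) :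
  is_grhom f1 -> is_grhom f2 -> is_grhom (grrow f1 f2).
Proof.
move=> hom1 hom2 n; have [X1 Y1] := hom1 n; have [X2 Y2] := hom2 n.
by rewrite /grrow !mul_row_block !mul_mx_row !mulmx0 !addr0 !add0r X1 Y1 X2 Y2.
Qed.

Lemma is_grhom_col A B C (g1 : grhom A C) (g2 : grhom B C) :
  is_grhom g1 -> is_grhom g2 -> is_grhom (grcol g1 g2).
Proof.
move=> hom1 hom2 n; have [X1 Y1] := hom1 n; have [X2 Y2] := hom2 n.
by rewrite /grcol !mul_block_col !mul_col_mx !mul0mx !addr0 !add0r X1 Y1 X2 Y2.
Qed.

Lemma is_grhom_opp A B (g : grhom A B) : is_grhom g -> is_grhom (gropp g).
Proof. by move=> hom n; have [eX eY] := hom n; rewrite /gropp !(mulNmx, mulmxN) eX eY. Qed.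

Lemma is_grhom_hsubmx C B1 B2 (s : grhom C (grsum B1 B2)) :
  is_grhom s ->
  is_grhom (fun n => lsubmx (s n) : 'M_(gdim C n, gdim B1 n)) /\
  is_grhom (fun n => rsubmx (s n) : 'M_(gdim C n, gdim B2 n)).
Proof.
move=> hom; split=> n; have [eX eY] := hom n; move: eX eY;
  rewrite -[s n]hsubmxK -[s (n + 1)]hsubmxK /= !mul_row_block !mul_mx_row;
  rewrite !mulmx0 !addr0 !add0r ?row_mxKl ?row_mxKr;
  by case/eq_row_mx=> ? ? /eq_row_mx[? ?].
Qed.

Lemma grhom_mulX M N (h : grhom M N) n (u : 'rV_(gdim M n)) (v : 'cV_(gdim N (n + 1))) :
  is_grhom h -> u *m h n *m (gX N n *m v) = u *m gX M n *m h (n + 1) *m v.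
Proof. by move=> hom; rewrite !mulmxA -(mulmxA u) (proj1 (hom n)) !mulmxA. Qed.

Lemma grhom_mulY M N (h : grhom M N) n (u : 'rV_(gdim M (n + 1))) (v : 'cV_(gdim N n)) :
  is_grhom h -> u *m gY M n *m h n *m v = u *m h (n + 1) *m (gY N n *m v).
Proof. by move=> hom; rewrite -(mulmxA u) (proj2 (hom n)) !mulmxA. Qed.

Lemma splits_grcol A B1 B2 C (f : grhom A (grsum B1 B2)) (g1 : grhom B1 C) (g2 : grhom B2 C) :
  splits f (grcol g1 g2) ->
  exists (h1 : grhom C B1) (h2 : grhom C B2),
    [/\ is_grhom h1, is_grhom h2 & forall n, h1 n *m g1 n + h2 n *m g2 n = 1%:M].
Proof.
case=> s [hom_s sec]; have [hom1 hom2] := is_grhom_hsubmx hom_s.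
exists (fun n => lsubmx (s n)), (fun n => rsubmx (s n)); split=> // n.
by rewrite -mul_row_col hsubmxK; exact: sec.
Qed.

Lemma short_exact_by_rank A B C (f : grhom A B) (g : grhom B C) :
  is_grhom f -> is_grhom g ->
  (forall n, [/\ row_free (f n), row_full (g n), f n *m g n = 0
               & (gdim A n + gdim C n)%N = gdim B n]) ->
  short_exact f g.
Proof.
move=> hom_f hom_g exact_n; split; [done | split; [done | move=> n]].
have [free_f full_g fg0 dimB] := exact_n n; split=> //.
have sub_fg : (f n <= kermx (g n))%MS by apply/sub_kermxP.
rewrite -(mxrank_leqif_sup sub_fg).2 mxrank_ker (eqP free_f) (eqP full_g).
by rewrite -dimB addnK.
Qed.

End GradedMorphisms.

Section Arcs.
Variable F : fieldType.
Local Notation farc := (@farc F).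

Lemma gdim_farc a b n : a < b -> gdim (farc a b) n = ((n <= b)%R + (n <= a)%R)%N.
Proof.
move=> lt_ab; rewrite /= /ideal_dim.
have -> : (absz (b - a - 1)%R)%:Z = b - a - 1 by lia.
by congr (nat_of_bool _ + nat_of_bool _)%N; lia.
Qed.

Lemma gX_farc a b n : gX (farc a b) n = xmx.
Proof. by apply/matrixP => i l; rewrite !mxE andbC. Qed.

Lemma gY_farc a b n : gY (farc a b) n = inclmx.
Proof. by apply/matrixP => i l; rewrite !mxE andbT eq_sym. Qed.

Definition farc_incl a1 b1 a2 b2 : grhom (farc a1 b1) (farc a2 b2) := fun n => inclmx.
Definition farc_x a1 b1 a2 b2 : grhom (farc a1 b1) (farc a2 b2) := fun n => xmx.

Lemma is_grhom_farc_incl a1 b1 a2 b2 : a1 < b1 -> a2 < b2 -> a1 <= a2 -> b1 <= b2 ->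
  is_grhom (farc_incl a1 b1 a2 b2).
Proof.
move=> lt_ab1 lt_ab2 le_a le_b n; rewrite /farc_incl !gX_farc !gY_farc !mul_basismx.
by split; apply: eq_basismx => i l; rewrite !gdim_farc //=; lia.
Qed.

Lemma is_grhom_farc_x a1 b1 a2 b2 : a1 < b1 -> a2 < b2 -> a1 <= b2 ->
  is_grhom (farc_x a1 b1 a2 b2).
Proof.
move=> lt_ab1 lt_ab2 le_ab n; rewrite /farc_x !gX_farc !gY_farc !mul_basismx.
by split; apply: eq_basismx => i l; rewrite !gdim_farc //=; lia.
Qed.

End Arcs.

Section FarcMorphisms.
Variables (F : fieldType) (a1 b1 a2 b2 : int).
Local Notation farc := (@farc F).
Variable h : grhom (farc a1 b1) (farc a2 b2).
Hypotheses (lt_ab1 : a1 < b1) (lt_ab2 : a2 < b2) (hom_h : is_grhom h).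

Lemma farc_hom_coef01 n : mxcoef 0 1 (h n) = 0.
Proof.
rewrite /mxcoef -(@xmx_mul_ecol0 _ _ (gdim (farc a2 b2) (n + 1))); last first.
  by rewrite !gdim_farc //; lia.
by rewrite -(@gX_farc F a2 b2 n) grhom_mulX // gX_farc erow0_mul_xmx !mul0mx mxE.
Qed.

Lemma farc_hom_coef11 n : n <= a1 -> mxcoef 1 1 (h n) = mxcoef 0 0 (h (n + 1)).
Proof.
move=> le_na1; rewrite /mxcoef -(@xmx_mul_ecol0 _ _ (gdim (farc a2 b2) (n + 1))); last first.
  by rewrite !gdim_farc //; lia.
by rewrite -(@gX_farc F a2 b2 n) grhom_mulX // gX_farc erow1_mul_xmx // gdim_farc //; lia.
Qed.

Lemma farc_hom_coef00S n : n + 1 <= b1 -> mxcoef 0 0 (h n) = mxcoef 0 0 (h (n + 1)).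
Proof.
move=> le_nb1; rewrite /mxcoef -(@erow_mul_inclmx _ (gdim (farc a1 b1) (n + 1))); last first.
  by rewrite !gdim_farc //; lia.
rewrite -(@gY_farc F a1 b1 n) grhom_mulY // gY_farc inclmx_mul_ecol //.
by rewrite !gdim_farc //; lia.
Qed.

Lemma farc_hom_coef00_eq0 n : b2 < b1 -> mxcoef 0 0 (h n) = 0.
Proof.
have coef_out m : b2 < m -> mxcoef 0 0 (h m) = 0.
  by move=> lt_b2m; rewrite mxcoef_eq0 // gdim_farc //; lia.
move=> lt_b; have [le_nb2 | /coef_out //] := lerP n b2.
have -> : n = b2 + 1 - (absz (b2 + 1 - n)%R)%:Z by lia.
elim: (absz _) => [|k IHk]; first by rewrite subr0 coef_out //; lia.
rewrite farc_hom_coef00S; last by lia.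
by have -> : b2 + 1 - k.+1%:Z + 1 = b2 + 1 - k%:Z by lia.
Qed.

End FarcMorphisms.

Ltac farc_lia := rewrite ?gdim_grsum ?gdim_farc //=; lia.

Section Crossing.
Variables (F : fieldType) (a b c d : int).
Hypotheses (lt_ac : a < c) (lt_cb : c < b) (lt_bd : b < d).
Local Notation farc := (@farc F).

Definition cross_f : grhom (farc a b) (grsum (farc c b) (farc a d)) :=
  grrow (farc_incl F a b c b) (farc_incl F a b a d).
Definition cross_g : grhom (grsum (farc c b) (farc a d)) (farc c d) :=
  grcol (farc_incl F c b c d) (gropp (farc_incl F a d c d)).
Definition cross_f' : grhom (farc c d) (grsum (farc a c) (farc b d)) :=
  grrow (farc_x F c d a c) (farc_incl F c d b d).
Definition cross_g' : grhom (grsum (farc a c) (farc b d)) (farc a b) :=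
  grcol (farc_incl F a c a b) (gropp (farc_x F b d a b)).

Lemma short_exact_cross : short_exact cross_f cross_g.
Proof.
apply: short_exact_by_rank.
- by apply: is_grhom_row; apply: is_grhom_farc_incl; lia.
- by apply: is_grhom_col; [|apply: is_grhom_opp]; apply: is_grhom_farc_incl; lia.
move=> n; rewrite /cross_f /cross_g /grrow /grcol /gropp /farc_incl.
split; last by farc_lia.
- apply/row_freeP; exists (col_mx inclmx 0).
  rewrite mul_row_col mulmx0 addr0 mul_basismx -basismx1.
  by apply: eq_basismx => i l; farc_lia.
- apply/row_fullP; have [le_nb | lt_bn] := lerP n b.
    exists (row_mx inclmx 0); rewrite mul_row_col mul0mx addr0 mul_basismx -basismx1.
    by apply: eq_basismx => i l; farc_lia.
  exists (row_mx 0 (- inclmx)); rewrite mul_row_col mul0mx add0r mulNmx mulmxN opprK.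
  by rewrite mul_basismx -basismx1; apply: eq_basismx => i l; farc_lia.
- rewrite mul_row_col mulmxN !mul_basismx; apply/eqP; rewrite subr_eq0; apply/eqP.
  by apply: eq_basismx => i l; farc_lia.
Qed.

Lemma short_exact_cross' : short_exact cross_f' cross_g'.
Proof.
apply: short_exact_by_rank.
- by apply: is_grhom_row; [apply: is_grhom_farc_x | apply: is_grhom_farc_incl]; lia.
- apply: is_grhom_col; [apply: is_grhom_farc_incl | apply/is_grhom_opp/is_grhom_farc_x]; lia.
move=> n; rewrite /cross_f' /cross_g' /grrow /grcol /gropp /farc_incl /farc_x.
split; last by farc_lia.
- apply/row_freeP; exists (col_mx 0 inclmx).
  rewrite mul_row_col mulmx0 add0r mul_basismx -basismx1.
  by apply: eq_basismx => i l; farc_lia.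
- apply/row_fullP; have [le_nc | lt_cn] := lerP n c.
    exists (row_mx inclmx 0); rewrite mul_row_col mul0mx addr0 mul_basismx -basismx1.
    by apply: eq_basismx => i l; farc_lia.
  exists (row_mx 0 (- basismx (fun _ => 1%N) predT)).
  rewrite mul_row_col mul0mx add0r mulNmx mulmxN opprK.
  by rewrite mul_basismx -basismx1; apply: eq_basismx => i l; farc_lia.
- rewrite mul_row_col mulmxN !mul_basismx; apply/eqP; rewrite subr_eq0; apply/eqP.
  by apply: eq_basismx => i l; farc_lia.
Qed.

Lemma cross_nonsplit : ~ splits cross_f cross_g.
Proof.
case/splits_grcol=> h1 [h2 [hom1 hom2 sec]].
have h1_c : mxcoef 1 1 (h1 c) = 0.
  rewrite (farc_hom_coef11 _ _ hom1) ?(farc_hom_coef00_eq0 _ _ hom1) //; lia.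
move/(congr1 (mxcoef 1 1)): (sec c); rewrite /farc_incl /gropp.
rewrite mxcoefD mulmxN mxcoefN !mxcoef_mul_inclmx ?h1_c; try farc_lia.
rewrite [mxcoef _ _ (h2 c)]mxcoef_eq0 ?mxcoef1; try farc_lia.
by rewrite subr0 => /eqP; rewrite eq_sym oner_eq0.
Qed.

Lemma cross_nonsplit' : ~ splits cross_f' cross_g'.
Proof.
case/splits_grcol=> h1 [h2 [hom1 hom2 sec]].
move/(congr1 (mxcoef 0 0)): (sec (c + 1)); rewrite /farc_incl /gropp /farc_x.
rewrite mxcoefD mulmxN mxcoefN mxcoef_mul_inclmx ?mxcoef_mul_xmx; try farc_lia.
rewrite [mxcoef _ _ (h1 (c + 1))]mxcoef_eq0 ?mxcoef1; try farc_lia.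
rewrite (farc_hom_coef01 _ _ hom2); try farc_lia.
by rewrite subr0 => /eqP; rewrite eq_sym oner_eq0.
Qed.

End Crossing.

Theorem lemma4p4 (a b c d : int) :
  a < c -> c < b -> b < d ->
  (exists (f : grhom (@farc CC a b) (grsum (@farc CC c b) (@farc CC a d)))
          (g : grhom (grsum (@farc CC c b) (@farc CC a d)) (@farc CC c d)),
      short_exact f g /\ ~ splits f g) /\
  (exists (f' : grhom (@farc CC c d) (grsum (@farc CC a c) (@farc CC b d)))
          (g' : grhom (grsum (@farc CC a c) (@farc CC b d)) (@farc CC a b)),
      short_exact f' g' /\ ~ splits f' g').
Proof.
move=> lt_ac lt_cb lt_bd; split.
  exists (cross_f CC a b c d), (cross_g CC a b c d).
  by split; [exact: short_exact_cross | exact: cross_nonsplit].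
exists (cross_f' CC a b c d), (cross_g' CC a b c d).
by split; [exact: short_exact_cross' | exact: cross_nonsplit'].
Qed.
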